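(* Let $U$ be a disjunctive uninorm with neutral element $e\in\,]0,1[$, let $x\in[0,1]$ with $x<e$ be such that $U(x,\cdot)$ is continuous with range $[0,1]$, and let $f(s)=U(x,s)$ for $s\in[0,1]$. Let $a_x=\lim_{n\to+\infty}x_U^{(n)}$ and $d_x=\lim_{n\to+\infty}x_U^{(-n)}$. Then: (i) $f(s)\neq s$ for all $s\in\,]a_x,d_x[$; (ii) if $f(s)=s$ for some $s\in[0,1]$, then $U(s,t)\notin\,]a_x,d_x[$ for all $t\in[0,1]$; (iii) $f(a_x)=a_x$ and $f(d_x)=d_x$; (iv) $U(a_x,d_x)\in\{a_x,d_x\}$.
   Context: A uninorm is a map $U:[0,1]^2\to[0,1]$ that is commutative, associative, non-decreasing in each variable, and has a neutral element $e\in[0,1]$; it is disjunctive if $U(1,0)=1$. Under the hypotheses there is a unique $y\in[0,1]$ with $U(x,y)=e$ (and $y>e$). Define $x_U^{(0)}=e$, $x_U^{(n)}=U(x,x_U^{(n-1)})$ for $n\in\mathbb{N}$, and $x_U^{(-n)}=y_U^{(n)}$ where $y_U^{(0)}=e$, $y_U^{(n)}=U(y,y_U^{(n-1)})$; the sequence $(x_U^{(n)})_{n\ge0}$ is non-increasing and $(x_U^{(-n)})_{n\ge0}$ is non-decreasing, so the limits exist. *)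

From Stdlib Require Import Reals.
Open Scope R_scope.

Definition I01 (x : R) : Prop := 0 <= x <= 1.

(* U : [0,1]^2 -> [0,1], represented as a total function R -> R -> R whose
   behaviour is only constrained on [0,1]^2. *)
Definition is_uninorm (U : R -> R -> R) (e : R) : Prop :=
  I01 e /\
  (forall x y, I01 x -> I01 y -> I01 (U x y)) /\
  (forall x y, I01 x -> I01 y -> U x y = U y x) /\
  (forall x y z, I01 x -> I01 y -> I01 z -> U x (U y z) = U (U x y) z) /\
  (forall x1 x2 y, I01 x1 -> I01 x2 -> I01 y -> x1 <= x2 -> U x1 y <= U x2 y) /\
  (forall x, I01 x -> U e x = x).

Definition disjunctive (U : R -> R -> R) : Prop := U 1 0 = 1.

Definition section_continuous (U : R -> R -> R) (x : R) : Prop :=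
  forall s, I01 s -> forall eps, 0 < eps ->
    exists delta, 0 < delta /\
      forall t, I01 t -> Rabs (t - s) < delta -> Rabs (U x t - U x s) < eps.

Definition section_range01 (U : R -> R -> R) (x : R) : Prop :=
  (forall s, I01 s -> I01 (U x s)) /\
  (forall z, I01 z -> exists s, I01 s /\ U x s = z).

Fixpoint upow (U : R -> R -> R) (e z : R) (n : nat) : R :=
  match n with
  | O => e
  | S m => U z (upow U e z m)
  end.

From Stdlib Require Import Reals Lra Lia.
Open Scope R_scope.

(* Put x_n = x_U^(n) and y_n = y_U^(n), so that U(x_n, y_n) = e for all n.
   If s is a fixed point of U(x, .) then it is also one of U(y, .) = U(x, .)^-1,
   hence of every U(x_n, .) and U(y_n, .).  For a_x < s < d_x some n has
   x_n <= s <= y_n, and monotonicity gives s = U(x_n, s) <= U(x_n, y_n) = e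
   <= U(y_n, s) = s, so s = e, i.e. x = U(x, e) = e: impossible.  This is (i),
   and (ii) follows because U(s, t) is again a fixed point.  The limits are
   fixed by continuity of U(x, .) (since U(x, y_(n+1)) = y_n), which is (iii),
   and then U(a_x, d_x) is a fixed point in [a_x, d_x], which gives (iv). *)

Lemma Un_cv_const (c : R) : Un_cv (fun _ => c) c.
Proof. intros eps Heps; exists 0%nat; intros n _; rewrite R_dist_eq; exact Heps. Qed.

Lemma Un_cv_le_const (u : nat -> R) (l c : R) :
  Un_cv u l -> (forall n, u n <= c) -> l <= c.
Proof. intros Hu Hle; exact (Rle_cv_lim Hle Hu (Un_cv_const c)). Qed.

Lemma Un_cv_ge_const (u : nat -> R) (l c : R) :
  Un_cv u l -> (forall n, c <= u n) -> c <= l.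
Proof. intros Hu Hge; exact (Rle_cv_lim Hge (Un_cv_const c) Hu). Qed.

Lemma Un_cv_succ (u : nat -> R) (l : R) : Un_cv u l -> Un_cv (fun n => u (S n)) l.
Proof.
  intros Hu; apply (Un_cv_ext (fun n => u (n + 1)%nat)); [|exact (CV_shift' u 1 l Hu)].
  intros n; now rewrite Nat.add_1_r.
Qed.

Lemma section_continuous_cv (U : R -> R -> R) (x : R) (u : nat -> R) (l : R) :
  section_continuous U x -> (forall n, I01 (u n)) -> I01 l ->
  Un_cv u l -> Un_cv (fun n => U x (u n)) (U x l).
Proof.
  intros Hc Hu Hl Hcv eps Heps.
  destruct (Hc l Hl eps Heps) as [delta [Hdelta Hcont]].
  destruct (Hcv delta Hdelta) as [N HN].
  exists N; intros n Hn; apply Hcont; [apply Hu | apply HN, Hn].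
Qed.

Section Uninorm.

Variables (U : R -> R -> R) (e : R).
Hypothesis HU : is_uninorm U e.

Lemma uninorm_neutral_I01 : I01 e.
Proof. apply HU. Qed.

Lemma uninorm_I01 x y : I01 x -> I01 y -> I01 (U x y).
Proof. apply HU. Qed.

Lemma uninormC x y : I01 x -> I01 y -> U x y = U y x.
Proof. apply HU. Qed.

Lemma uninormA x y z : I01 x -> I01 y -> I01 z -> U x (U y z) = U (U x y) z.
Proof. apply HU. Qed.

Lemma uninorm_monol x1 x2 y : I01 x1 -> I01 x2 -> I01 y -> x1 <= x2 -> U x1 y <= U x2 y.
Proof. apply HU. Qed.

Lemma uninorm_monor x y1 y2 : I01 x -> I01 y1 -> I01 y2 -> y1 <= y2 -> U x y1 <= U x y2.
Proof.
  intros Hx Hy1 Hy2 Hle; rewrite (uninormC x y1), (uninormC x y2) by assumption.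
  now apply uninorm_monol.
Qed.

Lemma uninorm_neutrall x : I01 x -> U e x = x.
Proof. apply HU. Qed.

Lemma uninorm_neutralr x : I01 x -> U x e = x.
Proof.
  intros Hx; rewrite uninormC by (exact Hx || exact uninorm_neutral_I01).
  now apply uninorm_neutrall.
Qed.

Lemma upow_I01 z : I01 z -> forall n, I01 (upow U e z n).
Proof.
  intros Hz n; induction n as [|n IH]; simpl.
  - exact uninorm_neutral_I01.
  - now apply uninorm_I01.
Qed.

Lemma upow_le_neutral z : I01 z -> z <= e -> forall n, upow U e z n <= e.
Proof.
  intros Hz Hze n; induction n as [|n IH]; simpl; [lra|].
  pose proof (upow_I01 z Hz n) as Hn.
  apply Rle_trans with (U e (upow U e z n)).
  - apply uninorm_monol; auto using uninorm_neutral_I01.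
  - now rewrite uninorm_neutrall.
Qed.

Lemma upow_ge_neutral z : I01 z -> e <= z -> forall n, e <= upow U e z n.
Proof.
  intros Hz Hez n; induction n as [|n IH]; simpl; [lra|].
  pose proof (upow_I01 z Hz n) as Hn.
  apply Rle_trans with (U e (upow U e z n)).
  - now rewrite uninorm_neutrall.
  - apply uninorm_monol; auto using uninorm_neutral_I01.
Qed.

Lemma upow_limit_I01 z l : I01 z -> Un_cv (upow U e z) l -> I01 l.
Proof.
  intros Hz Hl; split.
  - apply (Un_cv_ge_const _ _ _ Hl); intros n; apply upow_I01, Hz.
  - apply (Un_cv_le_const _ _ _ Hl); intros n; apply upow_I01, Hz.
Qed.

Lemma inverse_ge_neutral z w : I01 z -> I01 w -> z < e -> U z w = e -> e <= w.
Proof.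
  intros Hz Hw Hze Hzw.
  destruct (Rle_lt_dec e w) as [Hle|Hlt]; [exact Hle|].
  assert (Hle : U z w <= U z e).
  { apply uninorm_monor; auto using uninorm_neutral_I01. lra. }
  rewrite Hzw, uninorm_neutralr in Hle by exact Hz; lra.
Qed.

Lemma upow_inverse z w : I01 z -> I01 w -> U z w = e ->
  forall n, U (upow U e z n) (upow U e w n) = e.
Proof.
  intros Hz Hw Hzw n; induction n as [|n IH]; simpl.
  - exact (uninorm_neutrall e uninorm_neutral_I01).
  - pose proof (upow_I01 z Hz n); pose proof (upow_I01 w Hw n).
    rewrite <- uninormA, (uninormA (upow U e z n)), (uninormC (upow U e z n) w),
      <- (uninormA w), IH, uninormA, Hzw by auto using uninorm_I01, uninorm_neutral_I01.
    exact (uninorm_neutrall e uninorm_neutral_I01).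
Qed.

Lemma fixed_inverse z w s : I01 z -> I01 w -> I01 s ->
  U z w = e -> U z s = s -> U w s = s.
Proof.
  intros Hz Hw Hs Hzw Hzs.
  rewrite <- Hzs at 1; rewrite uninormA, (uninormC w z), Hzw by assumption.
  now apply uninorm_neutrall.
Qed.

Lemma upow_fixed z s : I01 z -> I01 s -> U z s = s -> forall n, U (upow U e z n) s = s.
Proof.
  intros Hz Hs Hzs n; induction n as [|n IH]; simpl.
  - now apply uninorm_neutrall.
  - rewrite <- uninormA by auto using upow_I01.
    now rewrite IH.
Qed.

Lemma fixed_between_powers z w s n : I01 z -> I01 w -> I01 s ->
  U z w = e -> U z s = s -> upow U e z n <= s <= upow U e w n -> s = e.
Proof.
  intros Hz Hw Hs Hzw Hzs [Hzn Hwn].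
  pose proof (upow_I01 z Hz n); pose proof (upow_I01 w Hw n).
  pose proof (upow_inverse z w Hz Hw Hzw n) as Hinv.
  assert (Hup : U (upow U e z n) s <= U (upow U e z n) (upow U e w n)) by now apply uninorm_monor.
  assert (Hdown : U (upow U e w n) (upow U e z n) <= U (upow U e w n) s) by now apply uninorm_monor.
  rewrite upow_fixed in Hup by assumption.
  rewrite uninormC, Hinv, (upow_fixed w) in Hdown
    by eauto using fixed_inverse.
  lra.
Qed.

Lemma fixed_point_outside_limits z w a d s : I01 z -> I01 w -> U z w = e ->
  Un_cv (upow U e z) a -> Un_cv (upow U e w) d -> a < s < d -> U z s = s -> z = e.
Proof.
  intros Hz Hw Hzw Ha Hd [Has Hsd] Hzs.
  assert (Hs : I01 s).
  { pose proof (upow_limit_I01 z a Hz Ha); pose proof (upow_limit_I01 w d Hw Hd).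
    unfold I01 in *; lra. }
  destruct (Ha (s - a)) as [N1 HN1]; [lra|].
  destruct (Hd (d - s)) as [N2 HN2]; [lra|].
  specialize (HN1 (max N1 N2) ltac:(lia)); specialize (HN2 (max N1 N2) ltac:(lia)).
  unfold R_dist in HN1, HN2; apply Rabs_def2 in HN1; apply Rabs_def2 in HN2.
  assert (Hse : s = e).
  { apply (fixed_between_powers z w s (max N1 N2)); auto; lra. }
  subst s; rewrite uninorm_neutralr in Hzs by exact Hz; exact Hzs.
Qed.

Lemma upow_limit_fixed z l : I01 z -> section_continuous U z ->
  Un_cv (upow U e z) l -> U z l = l.
Proof.
  intros Hz Hc Hl.
  apply (UL_sequence (fun n => U z (upow U e z n))).
  - apply section_continuous_cv; eauto using upow_I01, upow_limit_I01.
  - exact (Un_cv_succ _ _ Hl).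
Qed.

Lemma inverse_upow_limit_fixed z w l : I01 z -> I01 w -> U z w = e ->
  section_continuous U z -> Un_cv (upow U e w) l -> U z l = l.
Proof.
  intros Hz Hw Hzw Hc Hl.
  apply (UL_sequence (fun n => U z (upow U e w (S n)))).
  - apply section_continuous_cv; eauto using upow_I01, upow_limit_I01, Un_cv_succ.
  - apply (Un_cv_ext (upow U e w)); [|exact Hl].
    intros n; simpl; rewrite uninormA, Hzw by auto using upow_I01.
    now rewrite uninorm_neutrall by auto using upow_I01.
Qed.

Lemma uninorm_between a d : I01 a -> I01 d -> a <= e <= d -> a <= U a d <= d.
Proof.
  intros Ha Hd [Hae Hed]; split.
  - rewrite <- (uninorm_neutralr a) at 1 by exact Ha.
    apply uninorm_monor; auto using uninorm_neutral_I01.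
  - rewrite <- (uninorm_neutrall d) at 2 by exact Hd.
    apply uninorm_monol; auto using uninorm_neutral_I01.
Qed.

End Uninorm.

Theorem mainTheorem10 (U : R -> R -> R) (e x y a d : R) :
  is_uninorm U e -> disjunctive U -> 0 < e < 1 ->
  I01 x -> x < e ->
  section_continuous U x -> section_range01 U x ->
  (* y is the (unique) element of [0,1] with U(x,y) = e; x_U^(-n) = y_U^(n) *)
  I01 y -> U x y = e ->
  Un_cv (upow U e x) a -> Un_cv (upow U e y) d ->
  (forall s, a < s < d -> U x s <> s) /\
  (forall s, I01 s -> U x s = s ->
     forall t, I01 t -> ~ (a < U s t < d)) /\
  (U x a = a /\ U x d = d) /\
  (U a d = a \/ U a d = d).
Proof.
  intros HU _ _ Hx Hxe Hc _ Hy Hxy Ha Hd.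
  assert (Ia : I01 a) by exact (upow_limit_I01 U e HU x a Hx Ha).
  assert (Id : I01 d) by exact (upow_limit_I01 U e HU y d Hy Hd).
  assert (Hae : a <= e).
  { apply (Un_cv_le_const _ _ _ Ha), (upow_le_neutral U e HU x Hx), Rlt_le, Hxe. }
  assert (Hed : e <= d).
  { apply (Un_cv_ge_const _ _ _ Hd), (upow_ge_neutral U e HU y Hy).
    exact (inverse_ge_neutral U e HU x y Hx Hy Hxe Hxy). }
  assert (no_fixed : forall s, a < s < d -> U x s <> s).
  { intros s Hs Hxs.
    pose proof (fixed_point_outside_limits U e HU x y a d s Hx Hy Hxy Ha Hd Hs Hxs); lra. }
  assert (Hxa : U x a = a) by exact (upow_limit_fixed U e HU x a Hx Hc Ha).
  assert (Hxd : U x d = d) by exact (inverse_upow_limit_fixed U e HU x y d Hx Hy Hxy Hc Hd).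
  split; [exact no_fixed|]; split; [|split; [split; assumption|]].
  - intros s Hs Hxs t Ht Hst; apply (no_fixed (U s t) Hst).
    now rewrite (uninormA U e HU), Hxs.
  - pose proof (uninorm_between U e HU a d Ia Id (conj Hae Hed)) as Hbetween.
    assert (Hfixed : U x (U a d) = U a d) by now rewrite (uninormA U e HU), Hxa.
    destruct (Rle_lt_dec (U a d) a); [left; lra|].
    destruct (Rle_lt_dec d (U a d)); [right; lra|].
    exfalso; apply (no_fixed (U a d)); [lra | exact Hfixed].
Qed.
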